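(* Let $r \in \mathbb{Q}_{>0}$ be such that $S_r$ is atomic. Then for every $k \in \mathbb{N}$, $\mathcal{U}_k(S_r)$ is an arithmetic progression containing $k$ with difference $|\mathsf{n}(r) - \mathsf{d}(r)|$. More precisely: (1) If $r < 1$, then $\mathcal{U}_k(S_r) = \{k\}$ if $k < \mathsf{n}(r)$; $\mathcal{U}_k(S_r) = \{k + j(\mathsf{d}(r) - \mathsf{n}(r)) : j \in \mathbb{N}_0\}$ if $\mathsf{n}(r) \le k < \mathsf{d}(r)$; and $\mathcal{U}_k(S_r) = \{k + j(\mathsf{d}(r) - \mathsf{n}(r)) : j \in \mathbb{Z}, j \ge \ell\}$ for some negative integer $\ell$ if $k \ge \mathsf{d}(r)$. (2) If $r \in \mathbb{Q}_{>1} \setminus \mathbb{N}$, then $\mathcal{U}_k(S_r) = \{k\}$ if $k < \mathsf{d}(r)$; $\mathcal{U}_k(S_r) = \{k + j(\mathsf{n}(r) - \mathsf{d}(r)) : j \in \mathbb{N}_0\}$ if $\mathsf{d}(r) \le k < \mathsf{n}(r)$; and $\mathcal{U}_k(S_r) = \{k + j(\mathsf{n}(r) - \mathsf{d}(r)) : j \in \mathbb{Z}, j \ge \ell\}$ for some negative integer $\ell$ if $k \ge \mathsf{n}(r)$. (3) If $r \in \mathbb{N}$, then $\mathcal{U}_k(S_r) = \{k\}$ for every $k \in \mathbb{N}$.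
   Context: For $q \in \mathbb{Q}_{>0}$, $\mathsf{n}(q),\mathsf{d}(q)$ are the positive coprime integers with $q = \mathsf{n}(q)/\mathsf{d}(q)$. $S_r$ is the additive submonoid of $(\mathbb{Q}_{\ge 0},+)$ generated by $\{r^n : n \in \mathbb{N}_0\}$; it is atomic exactly when $r=1$ or $\mathsf{n}(r)>1$ (then for $r \notin \mathbb{N}$ its atoms are the $r^n$, $n\in\mathbb{N}_0$; for $r \in \mathbb{N}$, $S_r=\mathbb{N}_0$). $\mathsf{L}(x)$ denotes the set of lengths of factorizations of $x$ into atoms. For $k \in \mathbb{N}$, $\mathcal{U}_k(S_r)$ is the set of $\ell \in \mathbb{N}$ for which there exist atoms $a_1,\dots,a_k,b_1,\dots,b_\ell$ with $a_1+\dots+a_k = b_1 + \dots + b_\ell$; equivalently, the union of all sets $\mathsf{L}(x)$, $x \in S_r$, containing $k$. *)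

From HB Require Import structures.
From mathcomp Require Import all_boot all_order all_algebra.
Set Implicit Arguments. Unset Strict Implicit. Unset Printing Implicit Defensive.
Import Order.TTheory GRing.Theory Num.Theory.
Local Open Scope ring_scope.

Definition in_Sr (r x : rat) : Prop :=
  exists s : seq nat, x = \sum_(i <- s) r ^+ i.

Definition atom_Sr (r a : rat) : Prop :=
  [/\ in_Sr r a, a != 0 &
      forall b c, in_Sr r b -> in_Sr r c -> a = b + c -> b = 0 \/ c = 0].

Definition atomic_Sr (r : rat) : Prop :=
  forall x, in_Sr r x -> x != 0 ->
    exists s : seq rat, (forall a, a \in s -> atom_Sr r a) /\ x = \sum_(a <- s) a.

Definition U_Sr (r : rat) (k l : nat) : Prop :=
  (0 < l)%N /\
  exists as_ bs : seq rat,
    [/\ size as_ = k, size bs = l,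
        (forall a, a \in as_ -> atom_Sr r a),
        (forall b, b \in bs -> atom_Sr r b) &
        \sum_(a <- as_) a = \sum_(b <- bs) b].

From HB Require Import structures.
From mathcomp Require Import all_boot all_order all_algebra.
From mathcomp Require Import zify ring.
From Stdlib Require Import Classical_Prop.
Set Implicit Arguments. Unset Strict Implicit. Unset Printing Implicit Defensive.
Import Order.TTheory GRing.Theory Num.Theory.
Local Open Scope ring_scope.

(* An element of S_r is encoded by a sequence s of exponents, with value
   [powsum r s] = sum of the r^i, i in s.  The heart of the proof is an
   arithmetic fact about such encodings (lemma [length_diff]): if two
   sequences s, t have the same value, then writing the difference of their
   multiplicity vectors through "carries" q_i (a_i = d q_(i-1) - n q_i,
   which exist because n and d are coprime) shows that
   size s - size t = (d - n) Q, where Q >= 0 when no exponent occurs n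
   times in s and Q <= 0 when no exponent occurs d times in s.

   We then show that the atoms of S_r are exactly the powers r^i (n, d >= 2),
   so that U_k(S_r) is the set [Uexp r k] of lengths of exponent sequences
   with the same value as a sequence of length k.  For r < 1 this set is
   described using the trades n.r^i = d.r^(i+1) (moving lengths by d - n) and
   a least element of U_k; the case r > 1 reduces to 1/r by reversing
   exponents, r = 1/d is not atomic, and for r in N the only atom is 1. *)

Definition powsum (r : rat) (s : seq nat) : rat := \sum_(i <- s) r ^+ i.

Lemma powsum1 r i : powsum r [:: i] = r ^+ i.
Proof. by rewrite /powsum big_seq1. Qed.

Lemma powsum_cat r s t : powsum r (s ++ t) = powsum r s + powsum r t.
Proof. by rewrite /powsum big_cat. Qed.

Lemma powsum_nseq r m i : powsum r (nseq m i) = m%:R * r ^+ i.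
Proof. by rewrite /powsum big_nseq iter_addr_0 mulr_natl. Qed.

Lemma powsum_shift r s : powsum r (map S s) = r * powsum r s.
Proof.
by rewrite /powsum big_map mulr_sumr; apply: eq_bigr => i _; rewrite exprS.
Qed.

Lemma powsum_perm r s t : perm_eq s t -> powsum r s = powsum r t.
Proof. exact: perm_big. Qed.

Lemma mem_leq_sumn (x : nat) s : x \in s -> (x <= sumn s)%N.
Proof. by elim: s => //= y s IH; rewrite in_cons => /orP [/eqP ->|/IH]; lia. Qed.

Lemma sum_count_mem (R : nzRingType) (F : nat -> R) M s :
  all (fun x => x < M)%N s ->
  \sum_(i < M) (count_mem (i : nat) s)%:R * F i = \sum_(x <- s) F x.
Proof.
elim: s => [|x s IH] /=.
  by move=> _; rewrite big_nil big1 // => i _; rewrite mul0r.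
move=> /andP [xM sM]; rewrite big_cons -IH //.
under eq_bigr do rewrite natrD mulrDl.
rewrite big_split /= (bigD1 (Ordinal xM)) //= eqxx mul1r big1 ?addr0 // => i ix.
have -> : (x == i :> nat) = false.
  by apply/negP => /eqP xi; rewrite -val_eqE /= xi eqxx in ix.
by rewrite mul0r.
Qed.

Lemma perm_nseq_split (i m : nat) t : (m <= count_mem i t)%N ->
  exists rest, perm_eq t (nseq m i ++ rest).
Proof.
elim: m => [|m IH] mt; first by exists t.
have [rest trest] := IH (ltnW mt).
have i_rest : i \in rest.
  have := (permP trest) (pred1 i); rewrite count_cat count_nseq /= eqxx mul1n.
  move=> ct; rewrite -has_pred1 has_count; move: mt; rewrite ct.
  by rewrite -{1}(addn0 m) ltn_add2l.
exists (rem i rest); apply: (perm_trans trest).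
have -> : nseq m.+1 i ++ rem i rest = nseq m i ++ i :: rem i rest.
  by rewrite -addn1 nseqD -catA.
by rewrite perm_cat2l perm_to_rem.
Qed.

Section Carries.
Variables (n d : nat).
Hypotheses (n_gt0 : (0 < n)%N) (d_gt0 : (0 < d)%N).

(* For e = [a_0; ...; a_m], [scaled e] = d^(m+1) (a_0 + x a_1 + ... + x^m a_m)
   with x = n/d; it is an integer. *)
Fixpoint scaled (e : seq int) : int :=
  if e is a :: e' then a * d%:Z ^+ (size e').+1 + n%:Z * scaled e' else 0.

Fixpoint carry_chain (q : int) (e : seq int) : Prop :=
  if e is a :: e' then exists q', a = d%:Z * q - n%:Z * q' /\ carry_chain q' e'
  else q = 0.

(* Telescoping the carries: sum e = d q + (d - n) Q with Q = sum of the q_i.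
   Small entries force the signs of the carries: entries below n propagate
   q_i >= 0 forwards, entries below d propagate q_i <= 0 backwards. *)
Lemma carry_chain_sum q e : carry_chain q e -> exists Q : int,
  [/\ \sum_(a <- e) a = d%:Z * q + (d%:Z - n%:Z) * Q,
      all (fun a => a < n%:Z) e -> 0 <= q -> 0 <= Q &
      all (fun a => a < d%:Z) e -> q <= 0 /\ Q <= 0].
Proof.
elim: e q => [|a e IH] q /=.
  by move=> ->; exists 0; rewrite big_nil; split=> //; ring.
move=> [q' [-> chain]]; have [Q [sumQ posQ negQ]] := IH q' chain.
exists (q' + Q); split.
- by rewrite big_cons sumQ; ring.
- move=> /andP [a_lt small] q_ge0.
  have q'_ge0 : 0 <= q' by nia.
  by have := posQ small q'_ge0; lia.
- move=> /andP [a_lt small]; have [q'_le0 Q_le0] := negQ small.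
  by split; nia.
Qed.

Hypothesis co_nd : coprime n d.

(* Carries exist as soon as the scaled value is a multiple of d^(m+2): by
   coprimality, n divides q d - a_0 and one recurses on the tail. *)
Lemma carry_chain_scaled e q :
  scaled e = q * d%:Z ^+ (size e).+1 -> carry_chain q e.
Proof.
elim: e q => [|a e IH] q /=; first by rewrite expr1 => ?; nia.
set D := d%:Z ^+ (size e).+1 => eq_scaled.
have n_scaled : n%:Z * scaled e = (q * d%:Z - a) * D.
  by rewrite mulrBl -mulrA -exprS -eq_scaled; ring.
have n_dvd : (n%:Z %| q * d%:Z - a)%Z.
  rewrite -(@Gauss_dvdzl _ _ D); last by apply: coprimezXr; rewrite coprimezE.
  by rewrite -n_scaled dvdz_mulr.
exists ((q * d%:Z - a) %/ n%:Z)%Z; split; first by have := divzK n_dvd; lia.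
apply: IH; apply: (@mulfI _ n%:Z); first by rewrite eqz_nat -lt0n.
by rewrite n_scaled -{1}(divzK n_dvd) /D; ring.
Qed.

End Carries.

Definition horner_seq (r : rat) (e : seq int) : rat :=
  foldr (fun a acc => a%:~R + r * acc) 0 e.

Definition count_diff M (s t : seq nat) : seq int :=
  [seq (count_mem i s)%:Z - (count_mem i t)%:Z | i <- iota 0 M].

Lemma horner_count_diff r M s t :
  all (fun x => x < M)%N s -> all (fun x => x < M)%N t ->
  horner_seq r (count_diff M s t) = powsum r s - powsum r t.
Proof.
move=> sM tM; rewrite /powsum -(sum_count_mem _ sM) -(sum_count_mem _ tM) -sumrB.
have horner_iota a (g : nat -> int) : horner_seq r [seq g i | i <- iota a M] =
    \sum_(i < M) (g (a + i)%N)%:~R * r ^+ i.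
  elim: M a {sM tM} => [|M IH] a /=; first by rewrite big_ord0.
  rewrite big_ord_recl /= addn0 expr0 mulr1 IH mulr_sumr; congr (_ + _).
  by apply: eq_bigr => i _; rewrite /bump /= add1n addnS -addSn exprS; ring.
rewrite horner_iota; apply: eq_bigr => i _.
by rewrite add0n rmorphB /= -!pmulrn mulrBl.
Qed.

Lemma sum_count_diff M s t :
  all (fun x => x < M)%N s -> all (fun x => x < M)%N t ->
  \sum_(a <- count_diff M s t) a = (size s)%:Z - (size t)%:Z.
Proof.
move=> sM tM; rewrite big_map -[M in iota 0 M]subn0 -/(index_iota 0 M) big_mkord.
have := sum_count_mem (fun _ => 1 : int) sM; have := sum_count_mem (fun _ => 1 : int) tM.
rewrite !big_const_seq !count_predT !iter_addr_0 !natz => <- <-.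
by rewrite -sumrB; apply: eq_bigr => i _; rewrite !mulr1 !natz.
Qed.

Lemma length_diff (n d : nat) (r : rat) s t :
  (0 < n)%N -> (0 < d)%N -> coprime n d -> r * d%:R = n%:R ->
  powsum r s = powsum r t -> exists Q : int,
  [/\ (size s)%:Z - (size t)%:Z = (d%:Z - n%:Z) * Q,
      (forall i, count_mem i s < n)%N -> 0 <= Q &
      (forall i, count_mem i s < d)%N -> Q <= 0].
Proof.
move=> n_gt0 d_gt0 co_nd rd_n st.
pose M := (sumn s + sumn t).+1.
have sM : all (fun x => x < M)%N s by apply/allP => x /mem_leq_sumn; lia.
have tM : all (fun x => x < M)%N t by apply/allP => x /mem_leq_sumn; lia.
have scaled_horner e : (scaled n d e)%:~R = horner_seq r e * d%:R ^+ size e.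
  elim: e => [|a e IH] /=; first by rewrite mul0r.
  rewrite rmorphD !rmorphM /= rmorphXn IH -!pmulrn -rd_n !exprS; ring.
have chain : carry_chain n d 0 (count_diff M s t).
  apply: carry_chain_scaled => //; rewrite mul0r; apply/eqP.
  by rewrite -(intr_eq0 rat) scaled_horner horner_count_diff // st subrr mul0r.
have [Q [sumQ posQ negQ]] := carry_chain_sum n_gt0 d_gt0 chain.
have entry a : a \in count_diff M s t ->
    exists i, a = (count_mem i s)%:Z - (count_mem i t)%:Z.
  by move=> /mapP [i _ ->]; exists i.
exists Q; split.
- by rewrite -(sum_count_diff sM tM) sumQ mulr0 add0r.
- move=> small; apply: posQ => //; apply/allP => a /entry [i ->].
  by have := small i; lia.
- move=> small; apply: (proj2 (negQ _)); apply/allP => a /entry [i ->].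
  by have := small i; lia.
Qed.

Definition Uexp (r : rat) (k l : nat) : Prop :=
  (0 < l)%N /\
  exists s t : seq nat, [/\ size s = k, size t = l & powsum r s = powsum r t].

Lemma Uexp_refl r k : (0 < k)%N -> Uexp r k k.
Proof.
by move=> k_gt0; split => //; exists (nseq k 0%N), (nseq k 0%N); rewrite size_nseq.
Qed.

(* Reversing exponents below a common bound M turns an equality for r into
   one for 1/r (divide by r^M), so U_k(S_r) = U_k(S_(1/r)). *)
Lemma Uexp_inv r k l : 0 < r -> Uexp r k l -> Uexp r^-1 k l.
Proof.
move=> r_gt0 [l_gt0 [s [t [sk tl st]]]]; split => //.
pose M := (sumn s + sumn t)%N.
have reverse u : (forall x, x \in u -> x <= M)%N ->
    powsum r^-1 (map (fun i => M - i)%N u) = powsum r u / r ^+ M.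
  move=> uM; rewrite /powsum big_map mulr_suml big_seq [RHS]big_seq.
  apply: eq_bigr => i /uM iM.
  rewrite exprVn -(subnK iM) exprD invfM addnK mulrC mulfVK //.
  by rewrite expf_neq0 // gt_eqF.
exists (map (fun i => M - i)%N s), (map (fun i => M - i)%N t).
by rewrite !size_map !reverse ?st // => x /mem_leq_sumn; rewrite /M; lia.
Qed.

Section Atoms.
Variable r : rat.
Hypothesis r_gt0 : 0 < r.

(* An atom of S_r, being a nonempty sum of powers, is a single power. *)
Lemma atom_is_pow a : atom_Sr r a -> exists i, a = r ^+ i.
Proof.
move=> [[[|i s] ->] a_neq0 split_a]; first by rewrite big_nil eqxx in a_neq0.
have a_split : \sum_(j <- i :: s) r ^+ j = r ^+ i + powsum r s by rewrite big_cons.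
have in_i : in_Sr r (r ^+ i) by exists [:: i]; rewrite big_seq1.
have in_s : in_Sr r (powsum r s) by exists s.
exists i; rewrite a_split.
have [/eqP|->] := split_a _ _ in_i in_s a_split.
  by rewrite expf_eq0 gt_eqF // andbF.
by rewrite addr0.
Qed.

Lemma atoms_are_pows (l : seq rat) : (forall a, a \in l -> atom_Sr r a) ->
  exists s, l = map (fun i => r ^+ i) s.
Proof.
elim: l => [|a l IH] atoms; first by exists [::].
have [i ->] := atom_is_pow (atoms a (mem_head _ _)).
have [s ->] : exists s, l = map (fun i => r ^+ i) s.
  by apply: IH => b lb; apply: atoms; rewrite in_cons lb orbT.
by exists (i :: s).
Qed.

Variables (n d : nat).
Hypotheses (n_ge2 : (2 <= n)%N) (d_ge2 : (2 <= d)%N) (co_nd : coprime n d)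
  (rd_n : r * d%:R = n%:R).

(* Conversely every power is an atom: a splitting r^i = b + c into nonzero
   elements gives a representation of length >= 2, while [length_diff]
   (no exponent repeats in [:: i]) forces equal lengths. *)
Lemma pow_is_atom i : atom_Sr r (r ^+ i).
Proof.
split; [by exists [:: i]; rewrite big_seq1 | by rewrite expf_eq0 gt_eqF // andbF|].
move=> b c [s ->] [t ->] split_i.
have single : powsum r [:: i] = powsum r (s ++ t) by rewrite powsum1 powsum_cat.
have [Q [lenQ Q_ge0 Q_le0]] := length_diff (ltnW n_ge2) (ltnW d_ge2) co_nd rd_n single.
have count1 m : (count_mem m [:: i] <= 1)%N by rewrite /=; case: (i == m).
have Q0 : Q = 0.
  have := Q_ge0 (fun m => leq_ltn_trans (count1 m) n_ge2).
  by have := Q_le0 (fun m => leq_ltn_trans (count1 m) d_ge2); lia.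
move: lenQ; rewrite Q0 mulr0 size_cat.
case: s {split_i single} => [|x s]; first by left; rewrite big_nil.
by case: t => [|y t]; [right; rewrite big_nil | rewrite /=; lia].
Qed.

Lemma U_Sr_Uexp k l : U_Sr r k l <-> Uexp r k l.
Proof.
split=> [[l_gt0 [as_ [bs [ak bl a_atoms b_atoms ab]]]] | [l_gt0 [s [t [sk tl st]]]]].
  have [s def_as] := atoms_are_pows a_atoms; have [t def_bs] := atoms_are_pows b_atoms.
  split => //; exists s, t.
  by rewrite -ak -bl def_as def_bs !size_map; move: ab; rewrite def_as def_bs !big_map.
split => //; exists (map (fun i => r ^+ i) s), (map (fun i => r ^+ i) t).
by rewrite !size_map !big_map; split => // _ /mapP [i _ ->]; apply: pow_is_atom.
Qed.

End Atoms.

Lemma least_element (P : nat -> Prop) m : P m ->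
  exists m0, P m0 /\ forall k, P k -> (m0 <= k)%N.
Proof.
elim: m {-2}m (leqnn m) => [|N IH] m mN Pm.
  by exists m; split => // k _; move: mN; rewrite leqn0 => /eqP ->.
have [[k [Pk km]]|no_smaller] := classic (exists k, P k /\ (k < m)%N).
  by apply: (IH k) => //; lia.
exists m; split => // k Pk; rewrite leqNgt; apply/negP => km.
by apply: no_smaller; exists k.
Qed.

Definition progression_shape (U : nat -> nat -> Prop) (a b : int) : Prop :=
  forall k : nat, (0 < k)%N ->
    [/\ (k%:Z < a -> forall l : nat, U k l <-> l = k),
        (a <= k%:Z < b -> forall l : nat,
           U k l <-> exists j : nat, l%:Z = k%:Z + j%:Z * (b - a)) &
        (b <= k%:Z -> exists ell : int, ell < 0 /\ forall l : nat,
           U k l <-> exists j : int, ell <= j /\ l%:Z = k%:Z + j * (b - a))].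

Lemma progression_shape_eq (U V : nat -> nat -> Prop) a b :
  (forall k l, U k l <-> V k l) -> progression_shape U a b -> progression_shape V a b.
Proof.
move=> UV shape k k_gt0; have [small middle large] := shape k k_gt0.
split=> [ka l | kab l | kb].
- by rewrite -UV; apply: small.
- by rewrite -UV; apply: middle.
- by have [ell [ell_lt0 Uk]] := large kb; exists ell; split=> // l; rewrite -UV.
Qed.

Section BelowOne.
Variables (n d : nat) (r : rat).
Hypotheses (n_gt0 : (0 < n)%N) (n_lt_d : (n < d)%N) (co_nd : coprime n d)
  (rd_n : r * d%:R = n%:R).

Let d_gt0 : (0 < d)%N. Proof. lia. Qed.

Lemma Uexp_diff k l : Uexp r k l -> exists Q : int,
  [/\ k%:Z - l%:Z = (d%:Z - n%:Z) * Q, (k < n)%N -> 0 <= Q & (k < d)%N -> Q <= 0].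
Proof.
move=> [_ [s [t [sk tl st]]]].
have [Q [lenQ Q_ge0 Q_le0]] := length_diff n_gt0 d_gt0 co_nd rd_n st.
exists Q; rewrite -sk -tl; split => // ks; [apply: Q_ge0 | apply: Q_le0] => i;
  exact: leq_ltn_trans (count_size _ _) ks.
Qed.

(* A representation of n = n.r^0 of length n + j (d - n), obtained by
   trading n.r^i for d.r^(i+1) j times. *)
Fixpoint tower j : seq nat :=
  if j is j'.+1 then nseq (d - n) 1%N ++ map S (tower j') else nseq n 0%N.

Lemma powsum_tower j : powsum r (tower j) = n%:R.
Proof.
elim: j => [|j IH] /=; first by rewrite powsum_nseq expr0 mulr1.
rewrite powsum_cat powsum_nseq powsum_shift IH expr1 natrB ?(ltnW n_lt_d) //.
by rewrite -[RHS]rd_n; ring.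
Qed.

Lemma size_tower j : size (tower j) = (n + j * (d - n))%N.
Proof.
by elim: j => [|j IH] /=; rewrite ?size_cat ?size_map ?size_nseq ?IH; lia.
Qed.

Lemma Uexp_up k j : (n <= k)%N -> Uexp r k (k + j * (d - n)).
Proof.
move=> nk; split; first by rewrite addn_gt0 (leq_trans n_gt0 nk).
exists (nseq k 0%N), (nseq (k - n) 0%N ++ tower j).
rewrite !size_nseq size_cat size_nseq size_tower powsum_cat !powsum_nseq.
by rewrite powsum_tower expr0 !mulr1 -natrD subnK //; split => //; lia.
Qed.

(* Trading d.r for n.1 once lowers the length by d - n. *)
Lemma Uexp_down k : (d <= k)%N -> Uexp r k (k - (d - n)).
Proof.
move=> dk; split; first lia.
exists (nseq k 1%N), (nseq (k - d) 1%N ++ nseq n 0%N).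
rewrite !size_nseq size_cat !size_nseq powsum_cat !powsum_nseq expr0 expr1.
by rewrite mulr1 -rd_n natrB //; split => //; [lia | ring].
Qed.

(* A representation shorter than k repeats some exponent n times (otherwise
   its length would be at least k), and trading those n copies of r^i for d
   copies of r^(i+1) lengthens it by d - n. *)
Lemma Uexp_step k l : Uexp r k l -> (l < k)%N -> Uexp r k (l + (d - n)).
Proof.
move=> [l_gt0 [s [t [sk tl st]]]] lk.
have [i n_copies] : exists i, (n <= count_mem i t)%N.
  have [/hasP [i _]|/hasPn few] := boolP (has (fun i => n <= count_mem i t)%N t).
    by exists i.
  have [Q [lenQ Q_ge0 _]] := length_diff n_gt0 d_gt0 co_nd rd_n (esym st).
  have : 0 <= Q.
    apply: Q_ge0 => i; have [/few|/count_memPn ->] := boolP (i \in t) => //.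
    by rewrite ltnNge.
  by move: lenQ; rewrite sk tl; nia.
have [rest t_rest] := perm_nseq_split n_copies.
split; first lia.
exists s, (rest ++ nseq d i.+1); split => //.
  rewrite -tl (perm_size t_rest) !size_cat !size_nseq.
  by rewrite addnAC subnKC ?(ltnW n_lt_d) // addnC.
rewrite {}st (powsum_perm _ t_rest) !powsum_cat !powsum_nseq exprS mulrA -rd_n.
ring.
Qed.

Lemma Uexp_steps k l m : Uexp r k l -> (l + m * (d - n) <= k)%N ->
  Uexp r k (l + m * (d - n)).
Proof.
move=> Ukl; elim: m => [|m IH] bound; first by rewrite addn0.
rewrite mulSn addnCA addnC; apply: Uexp_step; [apply: IH|]; lia.
Qed.

Lemma lengths_small k : (0 < k)%N -> (k < n)%N -> forall l, Uexp r k l <-> l = k.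
Proof.
move=> k_gt0 kn l; split=> [/Uexp_diff [Q [lenQ Q_ge0 Q_le0]] | ->].
  have Q0 : Q = 0 by have := Q_ge0 kn; have := Q_le0 (ltn_trans kn n_lt_d); lia.
  by move: lenQ; rewrite Q0 mulr0; lia.
exact: Uexp_refl.
Qed.

Lemma lengths_middle k : (n <= k)%N -> (k < d)%N -> forall l,
  Uexp r k l <-> exists j : nat, l%:Z = k%:Z + j%:Z * (d%:Z - n%:Z).
Proof.
move=> nk kd l; split=> [/Uexp_diff [Q [lenQ _ Q_le0]] | [j def_l]].
  by have := Q_le0 kd; exists `|Q|%N; lia.
have -> : l = (k + j * (d - n))%N by lia.
exact: Uexp_up.
Qed.

(* For k >= d, let l0 be the least element of U_k (U_k contains k - (d - n)).
   Every length is l0 plus a nonnegative multiple of d - n, and all of these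
   are lengths: those up to k by trading upwards from l0, those beyond k by
   [Uexp_up]. *)
Lemma lengths_large k : (d <= k)%N -> exists ell : int, ell < 0 /\ forall l,
  Uexp r k l <-> exists j : int, ell <= j /\ l%:Z = k%:Z + j * (d%:Z - n%:Z).
Proof.
move=> dk.
have [l0 [Ukl0 least]] := least_element (Uexp_down dk).
have l0_le := least _ (Uexp_down dk).
have [Q0 [lenQ0 _ _]] := Uexp_diff Ukl0.
exists (- Q0); split; first by nia.
move=> l; split=> [Ukl | [j [j_ge def_l]]].
  have [Q [lenQ _ _]] := Uexp_diff Ukl.
  by have := least _ Ukl; exists (- Q); split; nia.
have [j_ge0 | j_lt0] := lerP 0 j.
  have -> : l = (k + `|j|%N * (d - n))%N by nia.
  by apply: Uexp_up; lia.
have -> : l = (l0 + `|(Q0 + j)%R|%N * (d - n))%N by nia.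
by apply: Uexp_steps => //; nia.
Qed.

Lemma Uexp_shape_below_one : progression_shape (Uexp r) n%:Z d%:Z.
Proof.
move=> k k_gt0; split=> [kn | /andP [nk kd] | dk].
- by apply: lengths_small; lia.
- by apply: lengths_middle; lia.
- by apply: lengths_large; lia.
Qed.

End BelowOne.

Lemma nat_in_Sr r (N : nat) : in_Sr r N%:R.
Proof. by exists (nseq N 0%N); rewrite -/(powsum r _) powsum_nseq expr0 mulr1. Qed.

(* For r = 1/d with d >= 2 the monoid S_r is not atomic: an atom r^i in a
   factorization of 1 would split as r^(i+1) + (d - 1) r^(i+1). *)
Lemma unit_fraction_not_atomic (d : nat) r : 0 < r -> (2 <= d)%N ->
  r * d%:R = 1 -> ~ atomic_Sr r.
Proof.
move=> r_gt0 d_ge2 rd_1 atomic.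
have [[|a s] [atoms sum_as]] := atomic 1 (nat_in_Sr r 1) (oner_neq0 _).
  by move/eqP: sum_as; rewrite big_nil oner_eq0.
have [i def_a] := atom_is_pow r_gt0 (atoms a (mem_head _ _)).
have [_ _ split_a] := atoms a (mem_head _ _).
have a_split : a = r ^+ i.+1 + (d.-1)%:R * r ^+ i.+1.
  rewrite def_a -[X in X + _]mul1r -mulrDl addrC natr1 prednK; last lia.
  by rewrite exprS mulrA [d%:R * r]mulrC rd_1 mul1r.
have pow_in : in_Sr r (r ^+ i.+1) by exists [:: i.+1]; rewrite big_seq1.
have pows_in : in_Sr r ((d.-1)%:R * r ^+ i.+1).
  by exists (nseq d.-1 i.+1); rewrite -/(powsum r _) powsum_nseq.
have [/eqP|/eqP] := split_a _ _ pow_in pows_in a_split.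
  by rewrite expf_eq0 gt_eqF // andbF.
by rewrite mulf_eq0 expf_eq0 (gt_eqF r_gt0) andbF orbF pnatr_eq0; lia.
Qed.

Section Integer.
Variable m : nat.
Hypothesis m_gt0 : (0 < m)%N.

Lemma in_Sr_nat x : in_Sr m%:R x -> exists N : nat, x = N%:R.
Proof.
move=> [s ->]; exists (\sum_(i <- s) m ^ i)%N.
by rewrite natr_sum; apply: eq_bigr => i _; rewrite natrX.
Qed.

Lemma atom_nat a : atom_Sr m%:R a <-> a = 1.
Proof.
split=> [atom_a | ->].
  have m_pos : 0 < m%:R :> rat by rewrite ltr0n.
  have [i def_a] := atom_is_pow m_pos atom_a.
  have [_ _ split_a] := atom_a; rewrite -natrX in def_a.
  have [m_i1 | m_i_gt1] := leqP (m ^ i) 1.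
    by rewrite def_a; have -> : (m ^ i)%N = 1%N by have := expn_gt0 m i; lia.
  have a_split : a = 1 + (m ^ i).-1%:R by rewrite def_a addrC natr1 prednK // ltnW.
  have [/eqP|/eqP] := split_a _ _ (nat_in_Sr _ 1) (nat_in_Sr _ _) a_split.
    by rewrite oner_eq0.
  by rewrite pnatr_eq0; lia.
split; [exact: nat_in_Sr 1 | exact: oner_neq0 |].
move=> b c /in_Sr_nat [Nb ->] /in_Sr_nat [Nc ->] /eqP.
rewrite -natrD eq_sym pnatr_eq1 => /eqP sum1.
have [->|->] : Nb = 0%N \/ Nc = 0%N by lia.
  by left.
by right.
Qed.

(* All atoms being 1, a factorization's length is the element itself. *)
Lemma lengths_nat k l : (0 < k)%N -> U_Sr m%:R k l <-> l = k.
Proof.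
move=> k_gt0; have ones s : (forall a, a \in s -> atom_Sr m%:R a) ->
    \sum_(a <- s) a = (size s)%:R.
  move=> atoms; rewrite big_seq (eq_bigr (fun _ => 1)) => [|a /atoms/atom_nat //].
  by rewrite -big_seq big_const_seq count_predT iter_addr_0.
split=> [[_ [as_ [bs [<- <- a_atoms b_atoms]]]] | ->].
  by rewrite (ones _ a_atoms) (ones _ b_atoms) => /eqP; rewrite eqr_nat => /eqP.
split => //; exists (nseq k 1), (nseq k 1).
rewrite size_nseq; split => // a;
  by rewrite mem_nseq => /andP [_ /eqP ->]; apply/atom_nat.
Qed.

End Integer.

Lemma rat_fraction r : 0 < r -> exists n d : nat,
  [/\ numq r = n%:Z, denq r = d%:Z, [&& 0 < n, 0 < d & coprime n d]%N &
      r * d%:R = n%:R].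
Proof.
move=> r_gt0; exists `|numq r|%N, `|denq r|%N.
have num_pos : 0 < numq r by rewrite numq_gt0.
have num_r : numq r = `|numq r|%N by rewrite abszE gtr0_norm.
have den_r : denq r = `|denq r|%N by rewrite abszE gtr0_norm ?denq_gt0.
split => //; first by rewrite coprime_num_den andbT; have := denq_gt0 r; lia.
by have := numqE r; rewrite {1}num_r {1}den_r -!pmulrn => ->.
Qed.

Section Atomic.
Variables (n d : nat) (r : rat).
Hypotheses (r_gt0 : 0 < r) (atomic : atomic_Sr r) (co_nd : coprime n d)
  (n_gt0 : (0 < n)%N) (d_gt0 : (0 < d)%N) (rd_n : r * d%:R = n%:R).

(* r < 1: then n < d, and n >= 2 since S_(1/d) is not atomic. *)
Lemma U_Sr_shape_below_one : r < 1 -> progression_shape (U_Sr r) n%:Z d%:Z.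
Proof.
move=> r_lt1.
have n_lt_d : (n < d)%N by rewrite -(ltr_nat rat) -rd_n gtr_pMl // ltr0n.
have n_ge2 : (2 <= n)%N.
  rewrite ltnNge; apply/negP => n_le1; have n1 : n = 1%N by lia.
  have d_ge2 : (2 <= d)%N by lia.
  by apply: (unit_fraction_not_atomic r_gt0 d_ge2 _ atomic); rewrite rd_n n1.
apply: progression_shape_eq (Uexp_shape_below_one n_gt0 n_lt_d co_nd rd_n) => k l.
by rewrite (U_Sr_Uexp r_gt0 n_ge2 _ co_nd rd_n) //; lia.
Qed.

(* r > 1 not an integer: 1/r = d/n < 1 and U_k(S_r) = U_k(S_(1/r)). *)
Lemma U_Sr_shape_above_one : 1 < r -> d != 1%N ->
  progression_shape (U_Sr r) d%:Z n%:Z.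
Proof.
move=> r_gt1 d_neq1.
have d_lt_n : (d < n)%N by rewrite -(ltr_nat rat) -rd_n ltr_pMl // ltr0n.
have d_ge2 : (2 <= d)%N by lia.
have rinv_d : r^-1 * n%:R = d%:R by rewrite -rd_n mulKf // gt_eqF.
have rinv_gt0 : 0 < r^-1 by rewrite invr_gt0.
have co_dn : coprime d n by rewrite coprime_sym.
apply: progression_shape_eq (Uexp_shape_below_one d_gt0 d_lt_n co_dn rinv_d) => k l.
rewrite (U_Sr_Uexp r_gt0 (leq_trans d_ge2 (ltnW d_lt_n)) d_ge2 co_nd rd_n).
by split=> [/(Uexp_inv rinv_gt0) | /(Uexp_inv r_gt0)]; rewrite ?invrK.
Qed.

End Atomic.

Theorem proposition4p9 (r : rat) (hr : 0 < r) (hatomic : atomic_Sr r) :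
  let n := numq r in let d := denq r in
  (* (1) r < 1 *)
  (r < 1 ->
   forall k : nat, (0 < k)%N ->
     [/\ (k%:Z < n -> forall l : nat, U_Sr r k l <-> l = k),
         (n <= k%:Z < d ->
            forall l : nat, U_Sr r k l <->
              exists j : nat, l%:Z = k%:Z + j%:Z * (d - n)) &
         (d <= k%:Z ->
            exists ell : int, ell < 0 /\
              forall l : nat, U_Sr r k l <->
                exists j : int, ell <= j /\ l%:Z = k%:Z + j * (d - n))])
  /\
  (* (2) r > 1, r not an integer *)
  (1 < r -> d != 1 ->
   forall k : nat, (0 < k)%N ->
     [/\ (k%:Z < d -> forall l : nat, U_Sr r k l <-> l = k),
         (d <= k%:Z < n ->
            forall l : nat, U_Sr r k l <->
              exists j : nat, l%:Z = k%:Z + j%:Z * (n - d)) &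
         (n <= k%:Z ->
            exists ell : int, ell < 0 /\
              forall l : nat, U_Sr r k l <->
                exists j : int, ell <= j /\ l%:Z = k%:Z + j * (n - d))])
  /\
  (* (3) r a positive integer *)
  (d = 1 ->
   forall k : nat, (0 < k)%N -> forall l : nat, U_Sr r k l <-> l = k).
Proof.
move=> num den; rewrite {}/num {}/den.
have [n [d [-> -> /and3P [n_gt0 d_gt0 co_nd] rd_n]]] := rat_fraction hr.
split; [|split].
- exact: U_Sr_shape_below_one.
- by move=> r_gt1 d_neq1; apply: U_Sr_shape_above_one.
- move=> /eqP; rewrite eqz_nat => /eqP d1 k k_gt0 l.
  by move: rd_n; rewrite d1 mulr1 => ->; apply: lengths_nat.
Qed.
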